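(* A set of representatives for the double cosets $\mathcal{B}\backslash\mathcal{K}/\mathcal{B}$ is $$\left\{\begin{pmatrix}1&0\\0&1\end{pmatrix},\ \begin{pmatrix}0&1\\1&0\end{pmatrix},\ \begin{pmatrix}1&0\\ \sqrt\epsilon\,\varpi^k&1\end{pmatrix}\ \middle|\ k\ge1\right\}.$$
   Context: Let $F$ be a non-archimedean local field with odd residual characteristic, ring of integers $\mathcal{O}_F$, uniformizer $\varpi$. Fix a non-square $\epsilon\in\mathcal{O}_F^\times$, $E=F[\sqrt\epsilon]$ with ring of integers $\mathcal{O}_E$; $\overline{x}$ is Galois conjugation. $G=\{g\in\mathrm{GL}_2(E):\overline{g}^{\top}\mathrm{w}g=\mathrm{w}\}$ with $\mathrm{w}=\begin{pmatrix}0&1\\1&0\end{pmatrix}$, $\mathcal{K}=G\cap M_2(\mathcal{O}_E)$, $B$ the subgroup of upper triangular matrices in $G$, and $\mathcal{B}=B\cap\mathcal{K}$. *)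

From HB Require Import structures.
From mathcomp Require Import all_boot all_order all_algebra.
Set Implicit Arguments. Unset Strict Implicit. Unset Printing Implicit Defensive.
Import Order.TTheory GRing.Theory Num.Theory.
Local Open Scope ring_scope.

(* A discrete valuation v : F^x -> Z, normalized (surjective); the value v 0
   is irrelevant (junk) and never used. *)
Section LocalField.
Variable F : fieldType.
Variable v : F -> int.

Definition is_normalized_discrete_valuation : Prop :=
  [/\ (forall x y : F, x != 0 -> y != 0 -> v (x * y) = v x + v y),
      (forall x y : F, x != 0 -> y != 0 -> x + y != 0 ->
          Num.min (v x) (v y) <= v (x + y)) &
      (exists x : F, x != 0 /\ v x = 1)].

(* x is "N-close to 0": |x| <= q^{-N} *)
Definition vge (N : int) (x : F) : Prop := x = 0 \/ N <= v x.

Definition inO (x : F) : Prop := vge 0 x.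
Definition inP (x : F) : Prop := vge 1 x.

Definition cauchy_seq (u : nat -> F) : Prop :=
  forall N : int, exists n0 : nat, forall m n : nat,
    (n0 <= m)%N -> (n0 <= n)%N -> vge N (u m - u n).

Definition converges_to (u : nat -> F) (l : F) : Prop :=
  forall N : int, exists n0 : nat, forall n : nat, (n0 <= n)%N -> vge N (u n - l).

Definition complete_valued : Prop :=
  forall u : nat -> F, cauchy_seq u -> exists l : F, converges_to u l.

Definition finite_residue_field : Prop :=
  exists s : seq F, (forall y, y \in s -> inO y) /\
    forall x, inO x -> exists2 y, y \in s & inP (x - y).

Definition nonarch_local_field : Prop :=
  [/\ is_normalized_discrete_valuation, complete_valued & finite_residue_field].

(* residual characteristic is odd  <->  2 is not in the maximal ideal *)
Definition odd_residual_char : Prop := ~ inP 2.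

Definition uniformizer (w : F) : Prop := w != 0 /\ v w = 1.

End LocalField.

(* An element (a, b) : F * F stands for a + b sqrt(eps). *)
Section Unitary.
Variable F : fieldType.
Variable eps : F.

Definition Eelt := (F * F)%type.
Definition ezero : Eelt := (0, 0).
Definition eone : Eelt := (1, 0).
Definition eadd (x y : Eelt) : Eelt := (x.1 + y.1, x.2 + y.2).
Definition eopp (x : Eelt) : Eelt := (- x.1, - x.2).
Definition emul (x y : Eelt) : Eelt :=
  (x.1 * y.1 + eps * (x.2 * y.2), x.1 * y.2 + x.2 * y.1).
Definition econj (x : Eelt) : Eelt := (x.1, - x.2).

Record M2 := mkM2 { m11 : Eelt; m12 : Eelt; m21 : Eelt; m22 : Eelt }.

Definition mmul (A B : M2) : M2 :=
  mkM2 (eadd (emul (m11 A) (m11 B)) (emul (m12 A) (m21 B)))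
       (eadd (emul (m11 A) (m12 B)) (emul (m12 A) (m22 B)))
       (eadd (emul (m21 A) (m11 B)) (emul (m22 A) (m21 B)))
       (eadd (emul (m21 A) (m12 B)) (emul (m22 A) (m22 B))).

Definition mstar (A : M2) : M2 :=
  mkM2 (econj (m11 A)) (econj (m21 A)) (econj (m12 A)) (econj (m22 A)).

Definition mdet (A : M2) : Eelt :=
  eadd (emul (m11 A) (m22 A)) (eopp (emul (m12 A) (m21 A))).

Definition mid : M2 := mkM2 eone ezero ezero eone.
Definition mw : M2 := mkM2 ezero eone eone ezero.

Definition inG (g : M2) : Prop := mdet g <> ezero /\ mmul (mmul (mstar g) mw) g = mw.

Variable v : F -> int.
(* O_E = O_F[sqrt eps] (E/F unramified since eps is a non-square unit) *)
Definition inOE (x : Eelt) : Prop := inO v x.1 /\ inO v x.2.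

Definition inK (g : M2) : Prop :=
  inG g /\ [/\ inOE (m11 g), inOE (m12 g), inOE (m21 g) & inOE (m22 g)].

Definition inBB (g : M2) : Prop := inK g /\ m21 g = ezero.

Inductive rep_idx := RepI | RepW | RepK of nat (* RepK n  <->  k = n+1 >= 1 *).

Definition rep (varpi : F) (i : rep_idx) : M2 :=
  match i with
  | RepI => mid
  | RepW => mw
  | RepK n => mkM2 eone ezero (0, varpi ^+ n.+1) eone  (* sqrt(eps) varpi^k *)
  end.

Definition double_coset_reps (r : rep_idx -> M2) : Prop :=
  [/\ (forall i, inK (r i)),
      (forall g, inK g -> exists i b1 b2,
          [/\ inBB b1, inBB b2 & g = mmul (mmul b1 (r i)) b2]) &
      (forall i j b1 b2, inBB b1 -> inBB b2 ->
          r j = mmul (mmul b1 (r i)) b2 -> i = j)].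

End Unitary.

(* Write g = [[a, b], [c, d]] in K.  If N(a) = a conj(a) is a unit, then conj(a) c is
   purely imaginary and g = L(t) b with b in calB, L(t) = [[1, 0], [t sqrt(eps), 1]] and
   t in O_F; otherwise N(c) is a unit and the same argument on the rows puts g in calB w calB.
   Now L(0) = 1, L(t) lies in calB w calB when t is a unit, and when v(t) = k >= 1 it lies in
   calB L(varpi^k) calB: every unit of O_F is congruent to a norm x^2 - eps z^2 modulo p^k
   (count squares in the finite residue field, then Newton's iteration, 2 being a unit),
   conjugating by diag(a^-1, conj a) divides t by N(a), and the remaining error of order p^k
   is absorbed by upper unipotent and diagonal elements of calB.  The representatives are
   inequivalent since v(N(c)), or c = 0, is unchanged by multiplication by calB on both sides. *)

From HB Require Import structures.
From mathcomp Require Import all_boot all_order all_algebra.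
From mathcomp Require Import ring zify.
From Stdlib Require Import ClassicalEpsilon.
Set Implicit Arguments. Unset Strict Implicit. Unset Printing Implicit Defensive.
Import Order.TTheory GRing.Theory Num.Theory.
Local Open Scope ring_scope.

Section Valuation.
Variables (F : fieldType) (v : F -> int).
Hypothesis hv : is_normalized_discrete_valuation v.

Local Notation vge := (vge v).
Local Notation inO := (inO v).
Local Notation inP := (inP v).

Lemma valM x y : x != 0 -> y != 0 -> v (x * y) = v x + v y.
Proof. by case: hv => hM _ _; apply: hM. Qed.

Lemma val1 : v 1 = 0.
Proof.
have := valM (oner_neq0 F) (oner_neq0 F); rewrite mulr1.
by move=> /(congr1 (fun z => z - v 1)); rewrite subrr addrK.
Qed.

Lemma valN x : v (- x) = v x.
Proof.
have hN1 : (-1 : F) != 0 by rewrite oppr_eq0 oner_neq0.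
have vN1 : v (-1) = 0 by have := valM hN1 hN1; rewrite mulrNN mulr1 val1; lia.
have [->|hx] := eqVneq x 0; first by rewrite oppr0.
by rewrite -mulN1r valM // vN1 add0r.
Qed.

Lemma valV x : x != 0 -> v x^-1 = - v x.
Proof. by move=> hx; have := valM hx (invr_neq0 hx); rewrite mulfV // val1; lia. Qed.

Lemma valX x n : x != 0 -> v (x ^+ n) = n%:Z * v x.
Proof.
move=> hx; elim: n => [|n IH]; first by rewrite expr0 val1 mul0r.
by rewrite exprS valM ?expf_neq0 // IH intS mulrDl mul1r.
Qed.

Lemma vgeD N x y : vge N x -> vge N y -> vge N (x + y).
Proof.
have [->|hx] := eqVneq x 0; first by rewrite add0r.
have [->|hy] := eqVneq y 0; first by rewrite addr0.
have [->|hxy] := eqVneq (x + y) 0; first by left.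
case=> [/eqP|hNx]; first by rewrite (negbTE hx).
case=> [/eqP|hNy]; first by rewrite (negbTE hy).
by right; case: hv => _ hD _; apply: le_trans (hD _ _ hx hy hxy); rewrite le_min hNx hNy.
Qed.

Lemma vgeN N x : vge N x -> vge N (- x).
Proof. by case=> [->|h]; [left; rewrite oppr0|right; rewrite valN]. Qed.

Lemma vgeB N x y : vge N x -> vge N y -> vge N (x - y).
Proof. by move=> hx hy; apply/vgeD/vgeN. Qed.

Lemma vgeM N M x y : vge N x -> vge M y -> vge (N + M) (x * y).
Proof.
case=> [->|hNx]; first by rewrite mul0r; left.
case=> [->|hMy]; first by rewrite mulr0; left.
have [->|hx] := eqVneq x 0; first by rewrite mul0r; left.
have [->|hy] := eqVneq y 0; first by rewrite mulr0; left.
by right; rewrite valM // lerD.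
Qed.

Lemma vgeW N M x : M <= N -> vge N x -> vge M x.
Proof. by move=> hMN [->|h]; [left|right; apply: le_trans h]. Qed.

Lemma vge_val N x : x != 0 -> vge N x -> N <= v x.
Proof. by move=> /negbTE hx [/eqP|//]; rewrite hx. Qed.

Lemma inO0 : inO 0. Proof. by left. Qed.
Lemma inO1 : inO 1. Proof. by right; rewrite val1. Qed.
Lemma inOD x y : inO x -> inO y -> inO (x + y). Proof. exact: vgeD. Qed.
Lemma inON x : inO x -> inO (- x). Proof. exact: vgeN. Qed.
Lemma inOB x y : inO x -> inO y -> inO (x - y). Proof. exact: vgeB. Qed.
Lemma inOM x y : inO x -> inO y -> inO (x * y).
Proof. by move=> hx hy; have := vgeM hx hy; rewrite addr0. Qed.

Lemma inOX x n : inO x -> inO (x ^+ n).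
Proof. by move=> hx; elim: n => [|n IH]; rewrite ?expr0 ?exprS; [exact: inO1|exact: inOM]. Qed.

Lemma inPD x y : inP x -> inP y -> inP (x + y). Proof. exact: vgeD. Qed.
Lemma inPN x : inP x -> inP (- x). Proof. exact: vgeN. Qed.
Lemma inPB x y : inP x -> inP y -> inP (x - y). Proof. exact: vgeB. Qed.
Lemma inPMr x y : inP x -> inO y -> inP (x * y).
Proof. by move=> hx hy; have := vgeM hx hy; rewrite addr0. Qed.
Lemma inPMl x y : inO x -> inP y -> inP (x * y).
Proof. by move=> hx hy; rewrite mulrC; apply: inPMr. Qed.
Lemma inP_inO x : inP x -> inO x. Proof. exact: vgeW. Qed.

Lemma inP1F : ~ inP 1.
Proof. by case=> [/eqP|]; rewrite ?oner_eq0 ?val1. Qed.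

Definition unitO (x : F) : Prop := x != 0 /\ v x = 0.

Lemma unitO1 : unitO 1.
Proof. by split; rewrite ?oner_neq0 ?val1. Qed.

Lemma unitO_inO x : unitO x -> inO x.
Proof. by case=> _ h; right; rewrite h. Qed.

Lemma unitO_inPF x : unitO x -> ~ inP x.
Proof. by case=> /negbTE hx h0 [/eqP|]; rewrite ?hx ?h0. Qed.

Lemma unitO_or_inP x : inO x -> unitO x \/ inP x.
Proof.
case=> [->|hx]; first by right; left.
have [->|x0] := eqVneq x 0; first by right; left.
case: (ltrgtP (v x) 0) => [hlt|hgt|h0]; [|by right; right|by left].
by move: (le_lt_trans hx hlt); rewrite ltxx.
Qed.

Lemma unitOV x : unitO x -> unitO x^-1.
Proof. by case=> hx vx; split; [rewrite invr_eq0|rewrite valV // vx oppr0]. Qed.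

Lemma unitO_invO x : unitO x -> inO x^-1.
Proof. by move/unitOV/unitO_inO. Qed.

Lemma unitOM x y : unitO x -> unitO y -> unitO (x * y).
Proof. by case=> hx vx [hy vy]; split; [rewrite mulf_neq0|rewrite valM // vx vy addr0]. Qed.

Lemma unitOD_inP u e : unitO u -> inP e -> unitO (u + e).
Proof.
move=> hu he; have hO : inO (u + e) by apply: inOD; [apply: unitO_inO|apply: inP_inO].
case: (unitO_or_inP hO) => // hp; case: (unitO_inPF hu).
by have := inPB hp he; rewrite addrK.
Qed.

Lemma unitO_of_mul_eq1 x y : inO x -> inO y -> x * y = 1 -> unitO x.
Proof.
move=> hx hy hxy.
have x0 : x != 0 by apply: contra_eq_neq hxy => ->; rewrite mul0r eq_sym oner_neq0.
have y0 : y != 0 by apply: contra_eq_neq hxy => ->; rewrite mulr0 eq_sym oner_neq0.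
have := valM x0 y0; rewrite hxy val1.
move=> hsum; have := vge_val x0 hx; have := vge_val y0 hy.
by split => //; lia.
Qed.

Lemma inP_of_unitOM_sq c x : unitO c -> inO x -> inP (c * (x * x)) -> inP x.
Proof.
move=> hc hx hp; case: (unitO_or_inP hx) => // ux.
by case: (unitO_inPF (unitOM hc (unitOM ux ux))).
Qed.

Lemma inP_of_sq x : inO x -> inP (x * x) -> inP x.
Proof.
by move=> hx; rewrite -[x * x]mul1r; apply: inP_of_unitOM_sq unitO1 hx.
Qed.

Lemma inP_subr_sq x y : inO x -> inO y -> inP (x * x - y * y) -> inP (x - y) \/ inP (x + y).
Proof.
move=> hx hy hp.
case: (unitO_or_inP (inOB hx hy)) => [u1|]; last by left.
case: (unitO_or_inP (inOD hx hy)) => [u2|]; last by right.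
case: (unitO_inPF (unitOM u1 u2)).
by have -> : (x - y) * (x + y) = x * x - y * y by ring.
Qed.

End Valuation.

Section ResidueField.
Variables (F : fieldType) (v : F -> int).
Hypothesis hv : is_normalized_discrete_valuation v.
Variable s : seq F.
Hypothesis s_inO : {in s, forall y, inO v y}.
Hypothesis s_cover : forall x, inO v x -> exists2 y, y \in s & inP v (x - y).
Hypothesis s_0 : 0 \in s.

Local Notation inO := (inO v).
Local Notation inP := (inP v).
Local Notation T := (seq_sub s).

Definition inPb (x : F) : bool :=
  if excluded_middle_informative (inP x) then true else false.

Lemma inPbP x : reflect (inP x) (inPb x).
Proof. by rewrite /inPb; case: excluded_middle_informative => h; constructor. Qed.

Definition residue (x : F) : T := odflt (SeqSub s_0) [pick j : T | inPb (x - ssval j)].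

Lemma ssval_inO (i : T) : inO (ssval i).
Proof. exact/s_inO/ssvalP. Qed.

Lemma residue_spec x : inO x -> inP (x - ssval (residue x)).
Proof.
move=> hx; rewrite /residue; case: pickP => [j /inPbP //|none].
have [y ys hy] := s_cover hx.
by have := none (SeqSub ys); move/inPbP: hy => /= ->.
Qed.

Lemma residue_eq x y : inP (x - y) -> residue x = residue y.
Proof.
move=> hp; rewrite /residue; congr odflt; apply: eq_pick => j /=.
apply/inPbP/inPbP => h.
- have -> : y - ssval j = (x - ssval j) - (x - y) by ring.
  exact: inPB.
- have -> : x - ssval j = (x - y) + (y - ssval j) by ring.
  exact: inPD.
Qed.

Lemma residue_eqP x y : inO x -> inO y -> residue x = residue y -> inP (x - y).
Proof.
move=> hx hy e; have := inPB hv (residue_spec hx) (residue_spec hy).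
by rewrite e; have -> : x - ssval (residue y) - (y - ssval (residue y)) = x - y by ring.
Qed.

Definition residues : {set T} := [set residue (ssval i) | i : T].

Lemma residue_mem x : inO x -> residue x \in residues.
Proof.
by move=> hx; apply/imsetP; exists (residue x) => //; apply/residue_eq/residue_spec.
Qed.

Lemma residueK i : i \in residues -> residue (ssval i) = i.
Proof.
case/imsetP => j _ ->; apply: residue_eq.
have -> : ssval (residue (ssval j)) - ssval j = - (ssval j - ssval (residue (ssval j))) by ring.
exact/(inPN hv)/residue_spec/ssval_inO.
Qed.

(* Pair each residue i with the flag "i comes before -i"; as f identifies at most i and -i,
   this injects residues into (image of f) x bool, missing (f 0, true). *)
Lemma card_residues_lt_image2 (T' : finType) (f : T -> T') :
  {in residues &, forall i j, f i = f j -> inP (ssval i * ssval i - ssval j * ssval j)} ->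
  (#|residues| < 2 * #|f @: residues|)%N.
Proof.
move=> hf; pose neg := fun i : T => residue (- ssval i).
set z := residue 0.
have z_mem : z \in residues by apply/residue_mem/inO0.
have hz : inP (ssval z) by have := inPN hv (residue_spec (inO0 v)); rewrite sub0r opprK.
have neg_z : neg z = z by apply: residue_eq; rewrite subr0; apply: inPN.
pose g := fun i : T => (f i, (enum_rank i < enum_rank (neg i))%N).
have g_inj : {in residues &, injective g}.
  move=> i j iC jC [fij eb].
  case: (inP_subr_sq hv (ssval_inO i) (ssval_inO j) (hf i j iC jC fij)) => hp.
    by rewrite -(residueK iC) -(residueK jC); apply: residue_eq.
  have ej : j = neg i by rewrite -(residueK jC); apply: residue_eq; rewrite opprK addrC.
  have ei : i = neg j by rewrite -(residueK iC); apply: residue_eq; rewrite opprK.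
  rewrite -ej -ei in eb; apply/enum_rank_inj/val_inj/eqP.
  by move: eb; case: ltngtP.
have g_sub : g @: residues \subset setX (f @: residues) [set: bool] :\ (f z, true).
  apply/subsetP => _ /imsetP [i iC ->]; rewrite !inE /= imset_f // !andbT.
  apply/negP => /eqP [fiz hlt].
  have hi : inP (ssval i * ssval i).
    have -> : ssval i * ssval i =
      (ssval i * ssval i - ssval z * ssval z) + ssval z * ssval z by ring.
    by apply: (inPD hv); [exact: hf|apply: inPMr => //; apply: inP_inO].
  have iz : i = z.
    rewrite -(residueK iC); apply: residue_eq; rewrite subr0.
    by apply: inP_of_sq => //; apply: ssval_inO.
  by move: hlt; rewrite iz neg_z ltnn.
have := subset_leq_card g_sub; rewrite (card_in_imset g_inj).
have fz_mem : (f z, true) \in setX (f @: residues) [set: bool].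
  by rewrite in_setX imset_f ?in_setT.
have := cardsD1 (f z, true) (setX (f @: residues) [set: bool]).
rewrite fz_mem cardsX cardsT card_bool /=.
by set a := #|_ :\ _|; set b := #|f @: _|; set c := #|residues|; lia.
Qed.

(* Pigeonhole: the classes of x^2 and of u + c z^2 each fill more than half the residue field. *)
Lemma sq_sub_sq_congr c u : unitO v c -> inO u ->
  exists x z, [/\ inO x, inO z & inP (x * x - c * (z * z) - u)].
Proof.
move=> hc hu.
have hsq (i : T) : inO (ssval i * ssval i) by apply: (inOM hv); apply: ssval_inO.
have hcsq (i : T) : inO (u + c * (ssval i * ssval i)) by apply/(inOD hv)/(inOM hv)/hsq/unitO_inO.
pose h := fun i : T => residue (ssval i * ssval i).
pose k := fun i : T => residue (u + c * (ssval i * ssval i)).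
have [/exists_inP [i _ /exists_inP [j _ /eqP hk]]|disj] :=
  boolP [exists i in residues, exists j in residues, h i == k j].
  exists (ssval i), (ssval j); split; try exact: ssval_inO.
  have := residue_eqP (hsq i) (hcsq j) hk.
  by have -> : ssval i * ssval i - (u + c * (ssval j * ssval j)) =
    ssval i * ssval i - c * (ssval j * ssval j) - u by ring.
have card_h : (#|residues| < 2 * #|h @: residues|)%N.
  by apply: card_residues_lt_image2 => i j _ _; apply: residue_eqP.
have card_k : (#|residues| < 2 * #|k @: residues|)%N.
  apply: card_residues_lt_image2 => i j _ _ e.
  have := inPMr hv (residue_eqP (hcsq i) (hcsq j) e) (unitO_invO hv hc).
  have [c0 _] := hc.
  by have -> : (u + c * (ssval i * ssval i) - (u + c * (ssval j * ssval j))) * c^-1 =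
     ssval i * ssval i - ssval j * ssval j by field.
have hk_disj : [disjoint h @: residues & k @: residues].
  apply/pred0P => a /=; apply/negP => /andP [/imsetP [i iC ->] /imsetP [j jC e]].
  move/negP: disj; apply; apply/exists_inP; exists i => //.
  by apply/exists_inP; exists j; rewrite ?e.
have hk_sub : h @: residues :|: k @: residues \subset residues.
  by apply/subsetP => a; rewrite inE => /orP [] /imsetP [i _ ->]; apply: residue_mem.
have := subset_leq_card hk_sub; rewrite cardsU (disjoint_setI0 hk_disj) cards0 subn0.
move: card_h card_k; set a := #|h @: _|; set b := #|k @: _|; set n := #|residues|.
lia.
Qed.

End ResidueField.

Section NormApproximation.
Variables (F : fieldType) (v : F -> int).
Hypothesis hv : is_normalized_discrete_valuation v.
Hypothesis hres : finite_residue_field v.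
Hypothesis hodd : odd_residual_char v.

Local Notation inO := (inO v).
Local Notation inP := (inP v).
Local Notation vge := (vge v).
Local Notation unitO := (unitO v).

Lemma unitO2 : unitO 2.
Proof. by case: (unitO_or_inP (inOD hv (inO1 hv) (inO1 hv))). Qed.

(* Newton's step y - (c y^2 - w) / (2 c y) turns an error of valuation k + 1 into c d^2. *)
Lemma hensel_sq c w y0 : unitO c -> unitO y0 -> inP (c * (y0 * y0) - w) ->
  forall k : nat, exists y, unitO y /\ vge k.+1%:Z (c * (y * y) - w).
Proof.
move=> hc hy0 hp; elim=> [|k [y [hy hr]]]; first by exists y0.
pose d := (c * (y * y) - w) / (2 * c * y).
have hd : vge k.+1%:Z d.
  rewrite -[k.+1%:Z]addr0; apply: (vgeM hv hr).
  exact/(unitO_invO hv)/(unitOM hv)/hy/(unitOM hv)/hc/unitO2.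
exists (y - d); split.
  by apply: (unitOD_inP hv) => //; apply: (inPN hv); apply: vgeW hd; lia.
have -> : c * ((y - d) * (y - d)) - w = c * (d * d).
  have [[c0 _] [y_0 _] [t0 _]] := And3 hc hy unitO2.
  by rewrite /d; field; rewrite c0 y_0 t0.
have := vgeM hv (unitO_inO hc) (vgeM hv hd hd).
by apply: vgeW; lia.
Qed.

Lemma approx_sq_sub_sq c u : unitO c -> unitO u -> forall k : nat,
  exists x z, [/\ inO x, inO z & vge k%:Z (x * x - c * (z * z) - u)].
Proof.
move=> hc hu k; have [s [s_inO s_cover]] := hres.
have s0_inO : {in 0 :: s, forall y, inO y}.
  by move=> y; rewrite inE => /orP [/eqP ->|/s_inO //]; apply: inO0.
have s0_cover x : inO x -> exists2 y, y \in 0 :: s & inP (x - y).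
  by move=> /s_cover [y ys hy]; exists y; rewrite // inE ys orbT.
have [x0 [z0 [hx0 hz0 hp]]] :=
  sq_sub_sq_congr hv s0_inO s0_cover (mem_head 0 s) hc (unitO_inO hu).
case: (unitO_or_inP hx0) => [ux|px].
  have hp' : inP (1 * (x0 * x0) - (c * (z0 * z0) + u)).
    by rewrite mul1r opprD addrA.
  have [x [hx hr]] := hensel_sq (unitO1 hv) ux hp' k.
  exists x, z0; split=> //; first exact: unitO_inO.
  by move: hr; rewrite mul1r opprD addrA; apply: vgeW; lia.
case: (unitO_or_inP hz0) => [uz|pz].
  have hc' : unitO (- c) by case: hc => c0 vc; split; rewrite ?oppr_eq0 ?(valN hv).
  have hp' : inP (- c * (z0 * z0) - (u - x0 * x0)).
    by move: hp; congr inP; ring.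
  have [z [hz hr]] := hensel_sq hc' uz hp' k.
  exists x0, z; split=> //; first exact: unitO_inO.
  have -> : x0 * x0 - c * (z * z) - u = - c * (z * z) - (u - x0 * x0) by ring.
  by apply: vgeW hr; lia.
case: (unitO_inPF hu).
have -> : u = (x0 * x0 - c * (z0 * z0)) - (x0 * x0 - c * (z0 * z0) - u) by ring.
apply: (inPB hv) hp; apply: (inPB hv); first exact: (inPMr hv).
by apply: (inPMl hv); [exact: unitO_inO|exact: (inPMr hv)].
Qed.

End NormApproximation.

Lemma pair_eqE (T : Type) (x y : T * T) : x.1 = y.1 -> x.2 = y.2 -> x = y.
Proof. by case: x y => [? ?] [? ?] /= -> ->. Qed.

Lemma M2_eqE (F : fieldType) (A B : M2 F) :
  m11 A = m11 B -> m12 A = m12 B -> m21 A = m21 B -> m22 A = m22 B -> A = B.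
Proof. by case: A B => ? ? ? ? [? ? ? ?] /= -> -> -> ->. Qed.

Lemma eq_by_relation (R : comPzRingType) (p q k e f : R) :
  p - q = k * (e - f) -> e = f -> p = q.
Proof. by move=> h ef; apply/eqP; rewrite -subr_eq0 h ef subrr mulr0. Qed.

Lemma eq_by_relations3 (R : comPzRingType) (p q k1 k2 k3 e1 e2 e3 f1 f2 f3 : R) :
  p - q = k1 * (e1 - f1) + k2 * (e2 - f2) + k3 * (e3 - f3) ->
  e1 = f1 -> e2 = f2 -> e3 = f3 -> p = q.
Proof. by move=> h h1 h2 h3; apply/eqP; rewrite -subr_eq0 h h1 h2 h3 !subrr !mulr0 !addr0. Qed.

Ltac destruct_M2 := repeat match goal with
  | x : Eelt _ |- _ => destruct x
  | x : (_ * _)%type |- _ => destruct x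
  | A : M2 _ |- _ => destruct A
  end.

Ltac M2_ring := apply: M2_eqE; apply: pair_eqE; rewrite /=; ring.

Section UnitaryGroup.
Variables (F : fieldType) (eps : F).

Local Notation mmul := (mmul eps).
Local Notation emul := (emul eps).
Local Notation mdet := (mdet eps).
Local Notation mw := (mw F).
Local Notation mid := (mid F).
Local Notation ezero := (ezero F).
Local Notation eone := (eone F).

Definition enorm (x : Eelt F) : F := x.1 * x.1 - eps * (x.2 * x.2).

Lemma enormM x y : enorm (emul x y) = enorm x * enorm y.
Proof. by case: x y => [? ?] [? ?]; rewrite /enorm /=; ring. Qed.

(* The coordinates of g^* w g = w, two of the eight being redundant. *)
Definition unitary_eqs (a b c d : Eelt F) : Prop :=
  [/\ a.1 * c.1 - eps * (a.2 * c.2) = 0,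
      b.1 * d.1 - eps * (b.2 * d.2) = 0,
      a.1 * d.1 - eps * (a.2 * d.2) + (c.1 * b.1 - eps * (c.2 * b.2)) = 1 &
      a.1 * d.2 - a.2 * d.1 + (c.1 * b.2 - c.2 * b.1) = 0].

Lemma mmulA A B C : mmul A (mmul B C) = mmul (mmul A B) C.
Proof. by destruct_M2; M2_ring. Qed.

Lemma mul1mx A : mmul mid A = A.
Proof. by destruct_M2; M2_ring. Qed.

Lemma mulmx1 A : mmul A mid = A.
Proof. by destruct_M2; M2_ring. Qed.

Lemma mstarM A B : mstar (mmul A B) = mmul (mstar B) (mstar A).
Proof. by destruct_M2; M2_ring. Qed.

Lemma mdetM A B : mdet (mmul A B) = emul (mdet A) (mdet B).
Proof. by destruct_M2; apply: pair_eqE; rewrite /=; ring. Qed.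

Lemma unitary_mdet_neq0 g : mmul (mmul (mstar g) mw) g = mw -> mdet g <> ezero.
Proof.
move=> /(congr1 mdet); rewrite !mdetM => + hg; rewrite hg => /(congr1 fst) /=.
rewrite /mdet /emul /ezero /eadd /eopp /= => /eqP.
by rewrite !(mulr0, mul0r, addr0, add0r, sub0r, mulr1) eq_sym oppr_eq0 oner_eq0.
Qed.

Lemma inG_mul A B : inG eps A -> inG eps B -> inG eps (mmul A B).
Proof.
move=> [_ hA] [_ hB]; suff h : mmul (mmul (mstar (mmul A B)) mw) (mmul A B) = mw.
  by split=> //; apply: unitary_mdet_neq0.
have -> : mmul (mmul (mstar (mmul A B)) mw) (mmul A B) =
    mmul (mmul (mstar B) (mmul (mmul (mstar A) mw) A)) B by rewrite mstarM !mmulA.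
by rewrite hA hB.
Qed.

Lemma inG_unitary_eqs a b c d : (2 : F) != 0 ->
  inG eps (mkM2 a b c d) <-> unitary_eqs a b c d.
Proof.
move=> h2; have half (x : F) : 2 * x = 0 -> x = 0.
  by move/eqP; rewrite mulf_eq0 (negbTE h2) => /eqP.
case: a b c d => [a1 a2] [b1 b2] [c1 c2] [d1 d2]; split.
  case=> _; rewrite /mmul /mstar /mw /emul /eadd /econj /ezero /eone /=.
  case=> e1 e2 e3 e4 e5 e6 e7 e8; split => /=.
  - by apply: half; rewrite -e1; ring.
  - by apply: half; rewrite -e7; ring.
  - by rewrite -e3; ring.
  - by rewrite -e4; ring.
case=> /= g1 g2 g3 g4.
suff h : mmul (mmul (mstar (mkM2 (a1, a2) (b1, b2) (c1, c2) (d1, d2))) mw)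
    (mkM2 (a1, a2) (b1, b2) (c1, c2) (d1, d2)) = mw.
  by split=> //; apply: unitary_mdet_neq0.
apply: M2_eqE; apply: pair_eqE; rewrite /=.
- by apply: (eq_by_relation (k := 2) _ g1); ring.
- ring.
- by apply: (eq_by_relation (k := 1) _ g3); ring.
- by apply: (eq_by_relation (k := 1) _ g4); ring.
- by apply: (eq_by_relation (k := 1) _ g3); ring.
- by apply: (eq_by_relation (k := -1) _ g4); ring.
- by apply: (eq_by_relation (k := 2) _ g2); ring.
- ring.
Qed.

Definition lower_unip (y : Eelt F) : M2 F := mkM2 eone ezero y eone.
Definition upper_unip (y : Eelt F) : M2 F := mkM2 eone y ezero eone.
Definition diag2 (a d : Eelt F) : M2 F := mkM2 a ezero ezero d.

Lemma mw_mulmx_mw : mmul mw mw = mid.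
Proof. by M2_ring. Qed.

Lemma lower_unip_mulN t : mmul (lower_unip (0, t)) (lower_unip (0, - t)) = mid.
Proof. by M2_ring. Qed.

Lemma upper_unip_mulN t : mmul (upper_unip (0, t)) (upper_unip (0, - t)) = mid.
Proof. by M2_ring. Qed.

Lemma lower_unip0 : lower_unip (0, 0) = mid.
Proof. by M2_ring. Qed.

Lemma m21_upper_mul b1 g b2 : m21 b1 = ezero -> m21 b2 = ezero ->
  m21 (mmul (mmul b1 g) b2) = emul (emul (m22 b1) (m21 g)) (m11 b2).
Proof.
case: b1 b2 => a b c d [a' b' c' d'] /= -> ->.
by destruct_M2; apply: pair_eqE; rewrite /=; ring.
Qed.

Lemma imag_ratio (a c : Eelt F) : a.1 * c.1 - eps * (a.2 * c.2) = 0 -> enorm a != 0 ->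
  c = emul (0, (a.1 * c.2 - a.2 * c.1) / enorm a) a.
Proof.
case: a c => [a1 a2] [c1 c2] /= g1 na; move: (na); rewrite /enorm /= => na'.
apply: pair_eqE; rewrite /=.
- by apply: (eq_by_relation (k := a1 / enorm (a1, a2)) _ g1); rewrite /enorm /=; field.
- by apply: (eq_by_relation (k := a2 / enorm (a1, a2)) _ g1); rewrite /enorm /=; field.
Qed.

Lemma lower_unip_unit_factor t : eps != 0 -> t != 0 ->
  lower_unip (0, t) = mmul (mmul (upper_unip (0, (eps * t)^-1)) mw)
                           (mkM2 (0, t) eone ezero (0, - (eps * t)^-1)).
Proof. by move=> e0 t0; apply: M2_eqE; apply: pair_eqE; rewrite /=; field; rewrite ?e0 ?t0. Qed.

Lemma lower_unip_diag_conj x z w n : n = x * x - eps * (z * z) -> n != 0 ->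
  lower_unip (0, w) = mmul (mmul (diag2 (x / n, - z / n) (x, - z)) (lower_unip (0, w / n)))
                           (diag2 (x, z) (x / n, z / n)).
Proof. by move=> -> n0; apply: M2_eqE; apply: pair_eqE; rewrite /=; field; rewrite ?n0. Qed.

Lemma lower_unip_perturb P s g : g = 1 + eps * s * P -> g != 0 ->
  lower_unip (0, P / g) = mmul (mmul (upper_unip (0, s)) (lower_unip (0, P)))
                               (mmul (upper_unip (0, - s / g)) (diag2 (g^-1, 0) (g, 0))).
Proof. by move=> -> g0; apply: M2_eqE; apply: pair_eqE; rewrite /=; field; rewrite ?g0. Qed.

End UnitaryGroup.

Section DoubleCosets.
Variables (F : fieldType) (v : F -> int) (eps varpi : F).
Hypothesis hv : is_normalized_discrete_valuation v.
Hypothesis hres : finite_residue_field v.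
Hypothesis hodd : odd_residual_char v.
Hypothesis heps : unitO v eps.
Hypothesis hvarpi : uniformizer v varpi.

Local Notation inO1 := (inO1 hv).
Local Notation inOD := (inOD hv).
Local Notation inON := (inON hv).
Local Notation inOB := (inOB hv).
Local Notation inOM := (inOM hv).
Local Notation inPD := (inPD hv).
Local Notation inPN := (inPN hv).
Local Notation inPB := (inPB hv).
Local Notation inPMl := (inPMl hv).
Local Notation inPMr := (inPMr hv).
Local Notation unitOM := (unitOM hv).
Local Notation unitO_invO := (unitO_invO hv).
Local Notation inO := (inO v).
Local Notation inP := (inP v).
Local Notation unitO := (unitO v).
Local Notation inOE := (inOE v).
Local Notation inK := (inK eps v).
Local Notation inBB := (inBB eps v).
Local Notation mmul := (mmul eps).
Local Notation emul := (emul eps).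
Local Notation enorm := (enorm eps).
Local Notation mw := (mw F).
Local Notation mid := (mid F).
Local Notation ezero := (ezero F).
Local Notation eone := (eone F).
Local Notation rep := (rep varpi).

Lemma two_neq0 : (2 : F) != 0.
Proof. by apply/eqP => h2; apply: hodd; rewrite h2; left. Qed.

Lemma inO_eps : inO eps. Proof. exact: unitO_inO. Qed.

Lemma inOE0 : inOE ezero. Proof. by split; apply: inO0. Qed.
Lemma inOE1 : inOE eone. Proof. by split; [apply: inO1|apply: inO0]. Qed.

Lemma inOE_add x y : inOE x -> inOE y -> inOE (eadd x y).
Proof. by case: x y => [? ?] [? ?] [/= ? ?] [/= ? ?]; split; apply: inOD. Qed.

Lemma inOE_mul x y : inOE x -> inOE y -> inOE (emul x y).
Proof.
case: x y => [x1 x2] [y1 y2] [/= ? ?] [/= ? ?].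
by split=> /=; apply: inOD; do ?apply: inOM; try exact: inO_eps.
Qed.

Lemma inO_enorm x : inOE x -> inO (enorm x).
Proof.
case: x => [? ?] [/= ? ?].
by apply: inOB; do ?apply: inOM; try exact: inO_eps.
Qed.

Lemma inK_mul A B : inK A -> inK B -> inK (mmul A B).
Proof.
case=> hA [? ? ? ?] [hB [? ? ? ?]]; split; first exact: inG_mul.
by split; apply: inOE_add; apply: inOE_mul.
Qed.

Lemma inBB_mul A B : inBB A -> inBB B -> inBB (mmul A B).
Proof.
case=> hA cA [hB cB]; split; first exact: inK_mul.
by rewrite /= cA cB; apply: pair_eqE; rewrite /=; ring.
Qed.

Lemma inK_of_unitary_eqs a b c d : inOE a -> inOE b -> inOE c -> inOE d ->
  unitary_eqs eps a b c d -> inK (mkM2 a b c d).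
Proof. by move=> ? ? ? ? hg; split=> //; apply/(inG_unitary_eqs _ _ _ _ _ two_neq0). Qed.

Lemma inBB_of_unitary_eqs a b d : inOE a -> inOE b -> inOE d ->
  unitary_eqs eps a b ezero d -> inBB (mkM2 a b ezero d).
Proof. by move=> ? ? ? hg; split=> //; apply: inK_of_unitary_eqs => //; apply: inOE0. Qed.

Lemma inOE_imag t : inO t -> inOE (0, t).
Proof. by split=> //; apply: inO0. Qed.

Lemma inBB_mid : inBB mid.
Proof.
by apply: inBB_of_unitary_eqs; try exact: inOE0; try exact: inOE1; split; rewrite /=; ring.
Qed.

Lemma inK_mw : inK mw.
Proof.
by apply: inK_of_unitary_eqs; try exact: inOE0; try exact: inOE1; split; rewrite /=; ring.
Qed.

Lemma inBB_upper_unip t : inO t -> inBB (upper_unip (0, t)).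
Proof.
move=> ht; apply: inBB_of_unitary_eqs; try exact: inOE1; try exact: inOE0; try exact: inOE_imag.
by split; rewrite /=; ring.
Qed.

Lemma inK_lower_unip t : inO t -> inK (lower_unip (0, t)).
Proof.
move=> ht; apply: inK_of_unitary_eqs; try exact: inOE1; try exact: inOE0; try exact: inOE_imag.
by split; rewrite /=; ring.
Qed.

Lemma inBB_diag2 a d : inOE a -> inOE d -> emul (econj a) d = eone -> inBB (diag2 a d).
Proof.
case: a d => [a1 a2] [d1 d2] ha hd /(congr1 (fun x => (x.1, x.2))) [/= e1 e2].
apply: inBB_of_unitary_eqs => //; first exact: inOE0.
split; rewrite /=; try ring.
- by rewrite -e1; ring.
- by rewrite -e2; ring.
Qed.

Lemma inBB_enorm_unit b : inBB b -> unitO (enorm (m11 b)) /\ unitO (enorm (m22 b)).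
Proof.
case: b => a b c d [[+ [ha _ _ hd]] /= c0]; rewrite c0.
move/(inG_unitary_eqs _ _ _ _ _ two_neq0).
case: a d ha hd => [a1 a2] [d1 d2] ha hd [_ _ /= g3 g4].
have nad : enorm (a1, a2) * enorm (d1, d2) = 1.
  have -> : enorm (a1, a2) * enorm (d1, d2) =
    (a1 * d1 - eps * (a2 * d2)) ^+ 2 - eps * (a1 * d2 - a2 * d1) ^+ 2 by rewrite /enorm /=; ring.
  by move: g3 g4; rewrite !(mul0r, mulr0, subr0, addr0) => -> ->; ring.
have [na nd] : inO (enorm (a1, a2)) /\ inO (enorm (d1, d2)) by split; apply: inO_enorm.
by split; [apply: unitO_of_mul_eq1 nad|rewrite mulrC in nad; apply: unitO_of_mul_eq1 nad].
Qed.

Definition in_dcoset (r g : M2 F) : Prop :=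
  exists b1 b2, [/\ inBB b1, inBB b2 & g = mmul (mmul b1 r) b2].

Lemma in_dcoset_refl r : in_dcoset r r.
Proof. by exists mid, mid; split; rewrite ?mul1mx ?mulmx1 //; apply: inBB_mid. Qed.

Lemma in_dcoset_mul b1 b2 r g : inBB b1 -> inBB b2 -> in_dcoset r g ->
  in_dcoset r (mmul (mmul b1 g) b2).
Proof.
move=> hb1 hb2 [c1 [c2 [hc1 hc2 ->]]].
exists (mmul b1 c1), (mmul c2 b2); split; try exact: inBB_mul.
by rewrite !mmulA.
Qed.

Definition lower_left_val (g : M2 F) : option int :=
  if enorm (m21 g) == 0 then None else Some (v (enorm (m21 g))).

Lemma lower_left_val_dcoset r g : in_dcoset r g -> lower_left_val g = lower_left_val r.
Proof.
case=> b1 [b2 [hb1 hb2 ->]]; rewrite /lower_left_val m21_upper_mul; last 2 first.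
- by case: hb1.
- by case: hb2.
have [_ [n1 vn1]] := inBB_enorm_unit hb1; have [[n2 vn2] _] := inBB_enorm_unit hb2.
rewrite !enormM !mulf_eq0 (negbTE n1) (negbTE n2) orbF /=.
by case: eqP => // /eqP nc; rewrite !(valM hv) ?mulf_neq0 // vn1 vn2 add0r addr0.
Qed.

Definition rep_code (i : rep_idx) : option int :=
  if i is RepK m then Some (m.+1 * 2)%:Z else if i is RepW then Some 0 else None.

Lemma lower_left_val_rep i : lower_left_val (rep i) = rep_code i.
Proof.
have [w0 vw] := hvarpi.
rewrite /lower_left_val /enorm; case: i => [||m] /=.
- by rewrite !(mulr0, subr0) eqxx.
- by rewrite !(mulr0, mul0r, subr0, mulr1) oner_eq0 (val1 hv).
have wm : varpi ^+ m.+1 != 0 by rewrite expf_neq0.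
have [e0 ve] := heps.
have nz : eps * (varpi ^+ m.+1 * varpi ^+ m.+1) != 0 by rewrite !mulf_neq0.
rewrite !(mulr0, sub0r) oppr_eq0 (negbTE nz) (valN hv) !(valM hv) ?mulf_neq0 //.
by rewrite (valX hv) // ve vw; congr Some; lia.
Qed.

Lemma rep_code_inj : injective rep_code.
Proof. by case=> [||m] [||n] //= [] h; first [exfalso; lia|congr RepK; lia]. Qed.

Lemma rep_uniq i j b1 b2 : inBB b1 -> inBB b2 ->
  rep j = mmul (mmul b1 (rep i)) b2 -> i = j.
Proof.
move=> hb1 hb2 e; apply: rep_code_inj; rewrite -!lower_left_val_rep.
by apply/esym/lower_left_val_dcoset; exists b1, b2.
Qed.

Lemma rep_inK i : inK (rep i).
Proof.
case: i => [||m]; [by case: inBB_mid|exact: inK_mw|].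
have [_ vw] := hvarpi.
by apply: (@inK_lower_unip (varpi ^+ m.+1)); apply: (inOX hv); right; rewrite vw.
Qed.

Lemma inK_lower_factor g : inK g -> unitO (enorm (m11 g)) ->
  exists2 t, inO t & exists2 U, inBB U & g = mmul (lower_unip (0, t)) U.
Proof.
case: g => a b c d hg /= ua; have [hG [ha _ hc _]] := hg; have [na _] := ua.
have [g1 _ _ _] := (inG_unitary_eqs _ _ _ _ _ two_neq0).1 hG.
have ec := imag_ratio g1 na.
set t := _ / enorm a in ec.
have ht : inO t.
  case: ha hc => ha1 ha2 [hc1 hc2].
  by rewrite /t; apply: inOM; [apply: inOB; apply: inOM|apply: unitO_invO].
exists t => //; exists (mmul (lower_unip (0, - t)) (mkM2 a b c d)).
  split; first exact: inK_mul (inK_lower_unip (inON ht)) hg.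
  by rewrite /= ec; apply: pair_eqE; rewrite /=; ring.
by rewrite mmulA lower_unip_mulN mul1mx.
Qed.

Lemma inK_w_factor g : inK g -> unitO (enorm (m21 g)) ->
  exists2 t, inO t & exists2 U, inBB U & g = mmul (mmul (upper_unip (0, t)) mw) U.
Proof.
case: g => a b c d hg /= uc; have [hG [ha _ hc _]] := hg; have [nc _] := uc.
have [g1 _ _ _] := (inG_unitary_eqs _ _ _ _ _ two_neq0).1 hG.
have g1' : c.1 * a.1 - eps * (c.2 * a.2) = 0 by rewrite mulrC [c.2 * _]mulrC.
have ea := imag_ratio g1' nc.
set t := _ / enorm c in ea.
have ht : inO t.
  case: ha hc => ha1 ha2 [hc1 hc2].
  by rewrite /t; apply: inOM; [apply: inOB; apply: inOM|apply: unitO_invO].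
exists t => //; exists (mmul mw (mmul (upper_unip (0, - t)) (mkM2 a b c d))).
  split; first by apply: inK_mul inK_mw (inK_mul _ hg); case: (inBB_upper_unip (inON ht)).
  by rewrite /= ea; apply: pair_eqE; rewrite /=; ring.
rewrite [RHS]mmulA -[mmul (mmul (upper_unip _) mw) mw]mmulA mw_mulmx_mw mulmx1.
by rewrite mmulA upper_unip_mulN mul1mx.
Qed.

(* From conj(a) d + conj(c) b = 1 and conj(a) c = s sqrt(eps), with -eps s^2 = N(a) N(c):
   if N(a) and N(c) were both in P, then so would be s, a, c, and finally 1. *)
Lemma inK_enorm_m21_unit g : inK g -> inP (enorm (m11 g)) -> unitO (enorm (m21 g)).
Proof.
case: g => [[a1 a2] [b1 b2] [c1 c2] [d1 d2]].
case=> hG [[/= ha1 ha2] [/= hb1 hb2] [/= hc1 hc2] [/= hd1 hd2]].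
have [/= g1 _ g3 g4] := (inG_unitary_eqs _ _ _ _ _ two_neq0).1 hG.
rewrite /= => pa; case: (unitO_or_inP (@inO_enorm (c1, c2) (conj hc1 hc2))) => // pc.
set s := a1 * c2 - a2 * c1.
have ps : inP s.
  apply: (inP_of_unitOM_sq hv heps); first by apply: inOB; apply: inOM.
  have -> : eps * (s * s) = - (enorm (a1, a2) * enorm (c1, c2)).
    by apply: (eq_by_relation (k := a1 * c1 - eps * (a2 * c2)) _ g1); rewrite /s /enorm /=; ring.
  by apply: inPN; apply: inPMr => //; apply: inP_inO.
have ea1 : a1 = enorm (a1, a2) * d1 - s * (eps * b2).
  apply: (eq_by_relations3 (k1 := b1) (k2 := - a1) (k3 := - (eps * a2)) _ g1 g3 g4).
  by rewrite /s /enorm /=; ring.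
have ea2 : a2 = enorm (a1, a2) * d2 - s * b1.
  apply: (eq_by_relations3 (k1 := b2) (k2 := - a2) (k3 := - a1) _ g1 g3 g4).
  by rewrite /s /enorm /=; ring.
have ec1 : c1 = s * (eps * d2) + enorm (c1, c2) * b1.
  apply: (eq_by_relations3 (k1 := d1) (k2 := - c1) (k3 := - (eps * c2)) _ g1 g3 g4).
  by rewrite /s /enorm /=; ring.
have ec2 : c2 = s * d1 + enorm (c1, c2) * b2.
  apply: (eq_by_relations3 (k1 := d2) (k2 := - c2) (k3 := - c1) _ g1 g3 g4).
  by rewrite /s /enorm /=; ring.
have inO_eps_mul x : inO x -> inO (eps * x) by apply: inOM inO_eps.
have pa1 : inP a1 by rewrite ea1; apply: inPB; apply: inPMr => //; apply: inO_eps_mul.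
have pa2 : inP a2 by rewrite ea2; apply: inPB; apply: inPMr.
have pc1 : inP c1 by rewrite ec1; apply: inPD; apply: inPMr => //; apply: inO_eps_mul.
have pc2 : inP c2 by rewrite ec2; apply: inPD; apply: inPMr.
case: (inP1F hv); rewrite -g3.
by apply: inPD; apply: inPB; try apply: (inPMl inO_eps); apply: inPMr.
Qed.

Lemma lower_unip_dcoset_mw t : unitO t -> in_dcoset mw (lower_unip (0, t)).
Proof.
move=> ut; have [t0 _] := ut; have [e0 _] := heps.
have hinv : inO (eps * t)^-1 by apply: unitO_invO; apply: unitOM.
rewrite (lower_unip_unit_factor e0 t0); apply: in_dcoset_mul (in_dcoset_refl _).
  exact: inBB_upper_unip.
apply: inBB_of_unitary_eqs; try exact: inOE1.
- exact/inOE_imag/unitO_inO.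
- by apply: inOE_imag; apply: inON.
- by split; rewrite /=; field; rewrite ?e0 ?t0.
Qed.

Lemma lower_unip_dcoset_norm r x z w : inO x -> inO z -> unitO (x * x - eps * (z * z)) ->
  in_dcoset r (lower_unip (0, w / (x * x - eps * (z * z)))) -> in_dcoset r (lower_unip (0, w)).
Proof.
set n := x * x - eps * (z * z) => hx hz un hr; have [n0 _] := un.
have hn' := unitO_invO un.
rewrite (lower_unip_diag_conj w (erefl n) n0); apply: in_dcoset_mul hr; apply: inBB_diag2.
- by split; rewrite /=; apply: inOM => //; apply: inON.
- by split => //; apply: inON.
- by apply: pair_eqE; rewrite /= /n; field; rewrite -/n n0.
- by split.
- by split; apply: inOM.
- by apply: pair_eqE; rewrite /= /n; field; rewrite -/n n0.
Qed.

Lemma lower_unip_dcoset_perturb r P s : inP P -> inO s ->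
  in_dcoset r (lower_unip (0, P)) -> in_dcoset r (lower_unip (0, P / (1 + eps * s * P))).
Proof.
set g := 1 + eps * s * P => hP hs hr.
have ug : unitO g by apply: (unitOD_inP hv (unitO1 hv)); apply: inPMl hP; apply: inOM inO_eps hs.
have [g0 _] := ug.
rewrite (lower_unip_perturb (erefl g) g0); apply: in_dcoset_mul hr; first exact: inBB_upper_unip.
apply: inBB_mul.
  by apply: inBB_upper_unip; apply: inOM; [apply: inON|apply: unitO_invO].
apply: inBB_diag2.
- by split; [apply: unitO_invO|apply: inO0].
- by split; [apply: unitO_inO|apply: inO0].
- by apply: pair_eqE; rewrite /=; field; rewrite g0.
Qed.

Lemma lower_unip_dcoset_repK t m : t != 0 -> v t = m.+1%:Z ->
  in_dcoset (rep (RepK m)) (lower_unip (0, t)).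
Proof.
move=> t0 vt; have [w0 vw] := hvarpi; have [e0 ve] := heps.
set P := varpi ^+ m.+1.
have P0 : P != 0 by rewrite expf_neq0.
have vP : v P = m.+1%:Z by rewrite (valX hv) // vw mulr1.
have ut : unitO (t / P).
  by split; [rewrite mulf_neq0 ?invr_eq0|rewrite (valM hv) ?invr_eq0 // (valV hv) // vt vP subrr].
have [x [z [hx hz]]] := approx_sq_sub_sq hv hres hodd heps ut m.+1.
set n := x * x - eps * (z * z) => hn.
have un : unitO n.
  have -> : n = t / P + (n - t / P) by rewrite addrC subrK.
  by apply: (unitOD_inP hv ut); apply: vgeW hn; rewrite lez_nat.
have [n0 _] := un.
set s := (n / (t / P) - 1) / (eps * P).
have hs : inO s.
  have -> : s = (n - t / P) * (t / P)^-1 * (eps * P)^-1.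
    by rewrite /s; field; rewrite t0 P0 e0.
  have hinv : vge v (- m.+1%:Z) (eps * P)^-1.
    by right; rewrite (valV hv) ?mulf_neq0 // (valM hv) // ve vP add0r.
  by have := vgeM hv (vgeM hv hn (unitO_invO ut)) hinv; rewrite addr0 subrr.
apply: (lower_unip_dcoset_norm hx hz un).
have -> : t / n = P / (1 + eps * s * P).
  have -> : 1 + eps * s * P = n / (t / P) by rewrite /s; field; rewrite e0 P0 t0.
  by field; rewrite t0 P0 n0.
apply: lower_unip_dcoset_perturb hs (in_dcoset_refl _).
by right; rewrite vP lez_nat.
Qed.

Lemma lower_unip_dcoset_rep t : inO t -> exists i, in_dcoset (rep i) (lower_unip (0, t)).
Proof.
move=> ht; have [->|t0] := eqVneq t 0.
  by exists RepI; rewrite lower_unip0; apply: in_dcoset_refl.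
case: (unitO_or_inP ht) => [ut|pt]; first by exists RepW; apply: lower_unip_dcoset_mw.
have : 1 <= v t by apply: vge_val.
case vt: (v t) => [[|m]|m] // _; exists (RepK m).
exact: lower_unip_dcoset_repK.
Qed.

Lemma inK_dcoset_rep g : inK g -> exists i, in_dcoset (rep i) g.
Proof.
move=> hg; have [_ [ha _ _ _]] := hg.
case: (unitO_or_inP (inO_enorm ha)) => [ua|pa].
  have [t ht [U hU ->]] := inK_lower_factor hg ua.
  have [i hi] := lower_unip_dcoset_rep ht.
  by exists i; rewrite -[lower_unip _](mul1mx eps); apply: in_dcoset_mul inBB_mid hU hi.
have [t ht [U hU ->]] := inK_w_factor hg (inK_enorm_m21_unit hg pa).
by exists RepW; apply: in_dcoset_mul (inBB_upper_unip ht) hU (in_dcoset_refl _).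
Qed.

End DoubleCosets.

Theorem proposition2p2 (F : fieldType) (v : F -> int)
  (hF : nonarch_local_field v) (hodd : odd_residual_char v)
  (varpi : F) (hvarpi : uniformizer v varpi)
  (eps : F) (heps_unit : eps != 0 /\ v eps = 0)
  (heps_nonsq : forall x : F, x * x != eps) :
  double_coset_reps eps v (rep varpi).
Proof.
have [hv _ hres] := hF.
split.
- exact: rep_inK.
- move=> g /(inK_dcoset_rep hv hres hodd heps_unit hvarpi) [i [b1 [b2 hb]]].
  by exists i, b1, b2.
- by move=> i j b1 b2; apply: rep_uniq.
Qed.
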